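(* Let $(X,\Psi)$ be a $\sigma$-totally bounded uniform space and $Y\subseteq X$. The following are equivalent: (1) $(X,\Psi)$ satisfies $\textsf{S}_1(\mathcal{O}_\Psi,\mathcal{O}_Y)$; (2) ONE has no winning strategy in the game ${\sf G}_1(\mathcal{O}_\Psi,\mathcal{O}_Y)$.
   Context: A uniformity on $X$ is a filter $\Psi$ on $X\times X$ whose members contain the diagonal $\Delta_X$, closed under $U\mapsto U^{-1}=\{(y,x):(x,y)\in U\}$, such that for each $U\in\Psi$ there is $V\in\Psi$ with $V\circ V\subseteq U$, and with $\bigcap\Psi=\Delta_X$. For $U\in\Psi$, $U(x)=\{y:(x,y)\in U\}$, and $X$ carries the topology in which $\{U(x):U\in\Psi\}$ is a neighbourhood base at $x$. A subset $K$ is totally bounded if for each $U\in\Psi$ there is a finite $F\subseteq X$ with $K\subseteq\bigcup_{x\in F}U(x)$; $X$ is $\sigma$-totally bounded if it is a countable union of totally bounded subsets. For $N\in\Psi$, $\mathcal{O}(N)=\{\mathrm{Int}(N(x)):x\in X\}$, and $\mathcal{O}_\Psi=\{\mathcal{O}(N):N\in\Psi\}$. $\mathcal{O}_Y$ is the set of families of open subsets of $X$ whose union contains $Y$. $\textsf{S}_1(\mathcal{A},\mathcal{B})$: for every sequence $(O_n)$ of elements of $\mathcal{A}$ there are $T_n\in O_n$ with $\{T_n:n\in\mathbb{N}\}\in\mathcal{B}$. Game ${\sf G}_1(\mathcal{A},\mathcal{B})$: in inning $n$ ONE chooses $O_n\in\mathcal{A}$, TWO responds with $T_n\in O_n$;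 TWO wins if $\{T_n:n\in\mathbb{N}\}\in\mathcal{B}$, else ONE wins. *)

From Stdlib Require Import List.

Definition rel (X : Type) := X -> X -> Prop.

Definition section {X : Type} (U : rel X) (x : X) : X -> Prop := fun y => U x y.

Definition rel_inv {X : Type} (U : rel X) : rel X := fun x y => U y x.
Definition rel_comp {X : Type} (V W : rel X) : rel X :=
  fun x z => exists y, V x y /\ W y z.
Definition rel_sub {X : Type} (U V : rel X) : Prop := forall x y, U x y -> V x y.

Record uniformity (X : Type) (Psi : rel X -> Prop) : Prop := {
  unif_full : Psi (fun _ _ => True);
  unif_up : forall U V, Psi U -> rel_sub U V -> Psi V;
  unif_cap : forall U V, Psi U -> Psi V -> Psi (fun x y => U x y /\ V x y);
  unif_diag : forall U, Psi U -> forall x, U x x;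
  unif_inv : forall U, Psi U -> Psi (rel_inv U);
  unif_half : forall U, Psi U -> exists V, Psi V /\ rel_sub (rel_comp V V) U;
  unif_sep : forall x y, (forall U, Psi U -> U x y) -> x = y
}.

Definition uopen {X : Type} (Psi : rel X -> Prop) (O : X -> Prop) : Prop :=
  forall x, O x -> exists U, Psi U /\ forall y, U x y -> O y.

Definition interior {X : Type} (Psi : rel X -> Prop) (A : X -> Prop) : X -> Prop :=
  fun x => exists O, uopen Psi O /\ (forall y, O y -> A y) /\ O x.

Definition totally_bounded {X : Type} (Psi : rel X -> Prop) (K : X -> Prop) : Prop :=
  forall U, Psi U -> exists F : list X,
    forall k, K k -> exists x, In x F /\ U x k.

Definition sigma_totally_bounded {X : Type} (Psi : rel X -> Prop) : Prop :=
  exists K : nat -> (X -> Prop),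
    (forall n, totally_bounded Psi (K n)) /\
    (forall x, exists n, K n x).

Definition family (X : Type) := (X -> Prop) -> Prop.

Definition cover_of {X : Type} (Psi : rel X -> Prop) (N : rel X) : family X :=
  fun A => exists x, A = interior Psi (section N x).

Definition O_Psi {X : Type} (Psi : rel X -> Prop) : family X -> Prop :=
  fun F => exists N, Psi N /\ F = cover_of Psi N.

Definition O_Y {X : Type} (Psi : rel X -> Prop) (Y : X -> Prop) : family X -> Prop :=
  fun F => (forall A, F A -> uopen Psi A) /\
           (forall y, Y y -> exists A, F A /\ A y).

Definition range_fam {X : Type} (T : nat -> (X -> Prop)) : family X :=
  fun A => exists n, A = T n.

Definition S1 {X : Type} (A B : family X -> Prop) : Prop :=
  forall O : nat -> family X, (forall n, A (O n)) ->
    exists T : nat -> (X -> Prop), (forall n, O n (T n)) /\ B (range_fam T).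

(* Game G_1(A, B).  A strategy of ONE maps the finite sequence of TWO's
   previous moves to ONE's next move (an element of A). *)
Definition prefix {X : Type} (T : nat -> (X -> Prop)) (n : nat) : list (X -> Prop) :=
  map T (seq 0 n).

Definition ONE_strategy {X : Type} (A : family X -> Prop)
  (sigma : list (X -> Prop) -> family X) : Prop :=
  forall h, A (sigma h).

Definition ONE_winning {X : Type} (A B : family X -> Prop)
  (sigma : list (X -> Prop) -> family X) : Prop :=
  ONE_strategy A sigma /\
  forall T : nat -> (X -> Prop),
    (forall n, sigma (prefix T n) (T n)) -> ~ B (range_fam T).

Definition ONE_has_no_winning_strategy {X : Type} (A B : family X -> Prop) : Prop :=
  ~ exists sigma, ONE_winning A B sigma.

From Stdlib Require Import List Lia Cantor Classical ClassicalEpsilon.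
Import ListNotations.

(** Against a strategy of ONE, TWO can restrict its answers at inning [n]
    to finitely many candidates: for each position [h] the cover [O(N_h)]
    has, by total boundedness of the [K_m] with [m <= n], a finite subfamily
    [Int(N_h(x))] absorbing every set [E_h(z)] that meets [K_m], where [E_h]
    is a symmetric "third" of [N_h].  Hence only finitely many positions are
    reachable at inning [n], and the intersection [W_n] of their [E_h] is an
    entourage.  Applying [S_1] to the covers [O(W_n)] along infinitely many
    disjoint subsequences gives selections [Int(W_n(z_n))] such that every
    [y] in [Y] is covered at arbitrarily late innings [n]; whenever [y] in
    [K_m] is covered at an inning [n >= m], TWO's answer at [n] absorbs
    [W_n(z_n)], so TWO's answers cover [Y]. *)

Lemma interior_mono {X : Type} (Psi : rel X -> Prop) (A B : X -> Prop) x :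
  (forall y, A y -> B y) -> interior Psi A x -> interior Psi B x.
Proof. intros HAB [O [HO [HOA Ox]]]. exists O. auto. Qed.

Lemma interior_sub {X : Type} (Psi : rel X -> Prop) (A : X -> Prop) x :
  interior Psi A x -> A x.
Proof. intros [O [_ [HOA Ox]]]. auto. Qed.

Lemma interior_open {X : Type} (Psi : rel X -> Prop) (A : X -> Prop) :
  uopen Psi (interior Psi A).
Proof.
  intros x [O [HO [HOA Ox]]]. destruct (HO x Ox) as [U [HU HUO]].
  exists U. split; [exact HU|]. intros y Uy. exists O. auto.
Qed.

Lemma S1_of_no_winning_strategy {X : Type} (A B : family X -> Prop) :
  ONE_has_no_winning_strategy A B -> S1 A B.
Proof.
  intros Hno O HO. apply NNPP. intro HnS1. apply Hno.
  exists (fun h => O (length h)). split; [intro h; apply HO|].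
  intros T HT HB. apply HnS1. exists T. split; [|exact HB].
  intro n. specialize (HT n). unfold prefix in HT.
  rewrite length_map, length_seq in HT. exact HT.
Qed.

Lemma S1_O_Psi_inhabited {X : Type} (Psi : rel X -> Prop) (B : family X -> Prop) :
  uniformity X Psi -> S1 (O_Psi Psi) B -> inhabited X.
Proof.
  intros HU HS1.
  destruct (HS1 (fun _ => cover_of Psi (fun _ _ => True))) as [T [HT _]].
  - intro n. exists (fun _ _ => True). split; [apply (unif_full _ _ HU)|reflexivity].
  - destruct (HT 0) as [x _]. exact (inhabits x).
Qed.

(* Split [nat] into the infinitely many subsequences [j |-> to_nat (m, j)]
   and select along each of them. *)
Lemma S1_O_Psi_cofinal_selection {X : Type} (Psi : rel X -> Prop) (Y : X -> Prop)
    (W : nat -> rel X) :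
  S1 (O_Psi Psi) (O_Y Psi Y) -> (forall n, Psi (W n)) ->
  exists z : nat -> X, forall y, Y y -> forall m,
    exists n, m <= n /\ interior Psi (section (W n) (z n)) y.
Proof.
  intros HS1 HW.
  assert (Hsel : forall m, exists zm : nat -> X, forall y, Y y ->
            exists j, interior Psi (section (W (to_nat (m, j))) (zm j)) y).
  { intro m. destruct (HS1 (fun j => cover_of Psi (W (to_nat (m, j))))) as [T [HT [_ HY]]].
    - intro j. exists (W (to_nat (m, j))). auto.
    - destruct (choice _ HT) as [zm Hzm]. exists zm.
      intros y Yy. destruct (HY y Yy) as [A [[j ->] Ay]].
      exists j. rewrite <- Hzm. exact Ay. }
  destruct (choice _ Hsel) as [zz Hzz].
  exists (fun n => let (m, j) := of_nat n in zz m j).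
  intros y Yy m. destruct (Hzz m y Yy) as [j Hj].
  exists (to_nat (m, j)). split.
  - pose proof (to_nat_non_decreasing m j). lia.
  - rewrite cancel_of_to. exact Hj.
Qed.

Definition rel_capl {X I : Type} (U : I -> rel X) (l : list I) : rel X :=
  fold_right (fun i acc x y => U i x y /\ acc x y) (fun _ _ => True) l.

Lemma uniformity_rel_capl {X I : Type} (Psi : rel X -> Prop) (U : I -> rel X) l :
  uniformity X Psi -> (forall i, Psi (U i)) -> Psi (rel_capl U l).
Proof.
  intros HU HUi. induction l as [|i l IH]; simpl.
  - apply (unif_full _ _ HU).
  - apply (unif_cap _ _ HU); auto.
Qed.

Lemma rel_capl_In {X I : Type} (U : I -> rel X) l i x y :
  In i l -> rel_capl U l x y -> U i x y.
Proof.
  induction l as [|i' l IH]; simpl; [tauto|].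
  intros [<-|Hin] [Hi Hl]; auto.
Qed.

Lemma entourage_sym_third {X : Type} (Psi : rel X -> Prop) (N : rel X) :
  uniformity X Psi -> Psi N ->
  exists E, Psi E /\ (forall x y, E x y -> E y x) /\
    (forall x y z w, E x y -> E y z -> E z w -> N x w).
Proof.
  intros HU HN.
  destruct (unif_half _ _ HU N HN) as [V [HV HVN]].
  destruct (unif_half _ _ HU V HV) as [U [HUe HUV]].
  exists (fun x y => U x y /\ rel_inv U x y). split; [|split].
  - apply (unif_cap _ _ HU); [|apply (unif_inv _ _ HU)]; exact HUe.
  - intros x y [Hxy Hyx]. split; assumption.
  - intros x y z w [Uxy _] [Uyz _] [Uzw _].
    apply HVN. exists z. split.
    + apply HUV. exists y. auto.
    + apply HUV. exists w. split; [exact Uzw|apply (unif_diag _ _ HU _ HUe)].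
Qed.

Section Plays.
Context {A : Type}.

Fixpoint histories (moves : nat -> list A -> list A) (n : nat) : list (list A) :=
  match n with
  | 0 => [[]]
  | S n' => flat_map (fun h => map (fun a => h ++ [a]) (moves n' h))
              (histories moves n')
  end.

Fixpoint play (resp : nat -> list A -> A) (n : nat) : list A :=
  match n with
  | 0 => []
  | S n' => play resp n' ++ [resp n' (play resp n')]
  end.

Lemma play_In_histories moves resp :
  (forall n h, In (resp n h) (moves n h)) ->
  forall n, In (play resp n) (histories moves n).
Proof.
  intros Hresp n. induction n as [|n IH]; simpl; [auto|].
  apply in_flat_map. exists (play resp n). split; [exact IH|].
  apply (in_map (fun a => play resp n ++ [a])). apply Hresp.
Qed.

End Plays.

Lemma prefix_play {X : Type} (resp : nat -> list (X -> Prop) -> (X -> Prop)) n :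
  prefix (fun k => resp k (play resp k)) n = play resp n.
Proof.
  induction n as [|n IH]; [reflexivity|].
  unfold prefix in *. rewrite seq_S, map_app, IH. reflexivity.
Qed.

Section Defeat.
Context {X : Type}.
Variables (Psi : rel X -> Prop) (K : nat -> X -> Prop) (x0 : X).
Variables (N E : list (X -> Prop) -> rel X) (F : list (X -> Prop) -> nat -> list X).
Hypothesis E_sym : forall h x y, E h x y -> E h y x.
Hypothesis E_third : forall h x y z w, E h x y -> E h y z -> E h z w -> N h x w.
Hypothesis F_net : forall h m k, K m k -> exists x, In x (F h m) /\ E h x k.

Definition answer (h : list (X -> Prop)) (x : X) : X -> Prop :=
  interior Psi (section (N h) x).

(* [x0] makes the answer well defined when no net point is needed. *)
Definition candidates (n : nat) (h : list (X -> Prop)) : list X :=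
  x0 :: flat_map (F h) (seq 0 (S n)).

Definition positions (n : nat) : list (list (X -> Prop)) :=
  histories (fun n h => map (answer h) (candidates n h)) n.

Definition common_entourage (n : nat) : rel X := rel_capl E (positions n).

Lemma candidate_absorbs n h z m q :
  In h (positions n) -> m <= n -> K m q -> common_entourage n z q ->
  exists x, In x (candidates n h) /\
    forall w, common_entourage n z w -> N h x w.
Proof.
  intros Hh Hmn Kq Hzq.
  destruct (F_net h m q Kq) as [x [Fx Exq]].
  exists x. split.
  - right. apply in_flat_map. exists m. split; [apply in_seq; lia|exact Fx].
  - intros w Hzw. apply (E_third h x q z w Exq).
    + apply E_sym. exact (rel_capl_In _ _ _ _ _ Hh Hzq).
    + exact (rel_capl_In _ _ _ _ _ Hh Hzw).
Qed.

Lemma absorbing_answer n h z :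
  exists x, In x (candidates n h) /\
    ((exists m q, In h (positions n) /\ m <= n /\ K m q /\ common_entourage n z q) ->
     forall w, common_entourage n z w -> N h x w).
Proof.
  destruct (classic (exists m q, In h (positions n) /\ m <= n /\ K m q /\
                                 common_entourage n z q))
    as [[m [q [Hh [Hmn [Kq Hzq]]]]]|Hno].
  - destruct (candidate_absorbs n h z m q Hh Hmn Kq Hzq) as [x [Hx Habs]].
    exists x. auto.
  - exists x0. split; [left; reflexivity|]. intro Hyes. contradiction.
Qed.

Lemma absorbing_play (z : nat -> X) :
  exists T : nat -> (X -> Prop),
    (forall n, cover_of Psi (N (prefix T n)) (T n)) /\
    forall n m q, m <= n -> K m q -> common_entourage n (z n) q ->
      forall w, interior Psi (section (common_entourage n) (z n)) w -> T n w.
Proof.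
  destruct (choice _ (fun p : nat * list (X -> Prop) =>
              absorbing_answer (fst p) (snd p) (z (fst p)))) as [pick Hpick].
  set (resp := fun n h => answer h (pick (n, h))).
  assert (Hplay : forall n, In (play resp n) (positions n)).
  { apply play_In_histories. intros n h. apply (in_map (answer h)), (proj1 (Hpick (n, h))). }
  exists (fun k => resp k (play resp k)). split.
  - intro n. rewrite prefix_play. exists (pick (n, play resp n)). reflexivity.
  - intros n m q Hmn Kq Hzq w. apply interior_mono. intros w' Hzw.
    apply (proj2 (Hpick (n, play resp n))); [|exact Hzw].
    exists m, q. simpl. auto.
Qed.

End Defeat.

Lemma S1_defeats_strategy {X : Type} (Psi : rel X -> Prop) (Y : X -> Prop)
    (N : list (X -> Prop) -> rel X) :
  uniformity X Psi -> sigma_totally_bounded Psi -> S1 (O_Psi Psi) (O_Y Psi Y) ->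
  (forall h, Psi (N h)) ->
  exists T, (forall n, cover_of Psi (N (prefix T n)) (T n)) /\ O_Y Psi Y (range_fam T).
Proof.
  intros HU [K [HK HKcov]] HS1 HN.
  destruct (S1_O_Psi_inhabited Psi _ HU HS1) as [x0].
  destruct (choice _ (fun h => entourage_sym_third Psi (N h) HU (HN h)))
    as [E HE].
  destruct (choice _ (fun p : list (X -> Prop) * nat => HK (snd p) (E (fst p))
              (proj1 (HE (fst p))))) as [Fp HFp].
  set (F := fun h m => Fp (h, m)).
  set (W := common_entourage Psi x0 N E F).
  destruct (S1_O_Psi_cofinal_selection Psi Y W HS1) as [z Hz].
  { intro n. apply (uniformity_rel_capl _ _ _ HU). intro h. apply HE. }
  destruct (absorbing_play Psi K x0 N E F (fun h => proj1 (proj2 (HE h)))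
              (fun h => proj2 (proj2 (HE h))) (fun h m => HFp (h, m)) z)
    as [T [HT Habs]].
  exists T. split; [exact HT|split].
  - intros A [n ->]. destruct (HT n) as [x ->]. apply interior_open.
  - intros y Yy. destruct (HKcov y) as [m Km].
    destruct (Hz y Yy m) as [n [Hmn Hy]].
    exists (T n). split; [exists n; reflexivity|].
    exact (Habs n m y Hmn Km (interior_sub _ _ _ Hy) y Hy).
Qed.

Theorem theorem2p3 (X : Type) (Psi : rel X -> Prop) (Y : X -> Prop) :
  uniformity X Psi ->
  sigma_totally_bounded Psi ->
  (S1 (O_Psi Psi) (O_Y Psi Y) <-> ONE_has_no_winning_strategy (O_Psi Psi) (O_Y Psi Y)).
Proof.
  intros HU HSTB. split.
  - intros HS1 [sigma [Hstrat Hwin]].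
    destruct (choice _ Hstrat) as [N HN].
    destruct (S1_defeats_strategy Psi Y N HU HSTB HS1 (fun h => proj1 (HN h)))
      as [T [HT HY]].
    apply (Hwin T); [|exact HY].
    intro n. rewrite (proj2 (HN _)). apply HT.
  - apply S1_of_no_winning_strategy.
Qed.
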